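(* Let $\zeta_5=\exp(2\pi i/5)$, $K=\mathbb{Q}(\zeta_5)\subset\mathbb{C}$, and $\mathcal{O}_K=\mathbb{Z}[\zeta_5]$ its ring of integers. Let $\sigma:K\to\mathbb{C}$ be the field embedding with $\sigma(\zeta_5)=\zeta_5^2$, and set $$\mathcal{S}=\{z\in\mathcal{O}_K : |\sigma(z)|\le 1\}\subseteq\mathbb{C}.$$ Then for every $z\in\mathcal{S}$, $$\min_{z'\in\mathcal{S}\setminus\{z\}}|z'-z|\in\left\{\tfrac{\sqrt5-1}{2},\,1\right\}.$$
   Context: Elements of $K$ are regarded as complex numbers via the inclusion $K\subset\mathbb{C}$; $|\cdot|$ is the complex absolute value. *)

From Stdlib Require Import Reals ZArith.
From Coquelicot Require Import Coquelicot.

Open Scope C_scope.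

Definition zeta5 : C := (cos (2 * PI / 5), sin (2 * PI / 5))%R.

Definition ZtoC (n : Z) : C := RtoC (IZR n).

Definition zcomb (a0 a1 a2 a3 : Z) (w : C) : C :=
  ZtoC a0 + ZtoC a1 * w + ZtoC a2 * w ^ 2 + ZtoC a3 * w ^ 3.

Definition in_OK (z : C) : Prop :=
  exists a0 a1 a2 a3 : Z, z = zcomb a0 a1 a2 a3 zeta5.

(* The embedding sigma : K -> C with sigma(zeta5) = zeta5^2 sends
   a0 + a1 zeta5 + a2 zeta5^2 + a3 zeta5^3 to the same combination of powers
   of zeta5^2.  S = { z in O_K : |sigma z| <= 1 }. *)
Definition in_S (z : C) : Prop :=
  exists a0 a1 a2 a3 : Z,
    z = zcomb a0 a1 a2 a3 zeta5 /\ Cmod (zcomb a0 a1 a2 a3 (zeta5 ^ 2)) <= 1.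

(* Write g = (sqrt 5 - 1) / 2 = zeta5 + zeta5^4.  For w in Z[zeta5] the squared modulus
   |w|^2 = w * conj w is reduced by zeta5^4 = -(1 + zeta5 + zeta5^2 + zeta5^3) to p + q g with
   p, q integers, and |sigma w|^2 is its conjugate p - q (1 + g).  For a difference w = z' - z
   of two points of S we have |sigma w| <= 2, and 0 < |w| < 1 then forces p = 1, q = -1,
   i.e. |w| = g.  Conversely sigma z lies in the closed unit disk, so sigma z + v stays in it
   for one of the five fifth roots of unity v; since v = sigma u for a fifth root of unity u,
   the point z + u is a point of S at distance exactly 1.  Hence the minimal distance is g
   if g is attained and 1 otherwise. *)

From Stdlib Require Import Reals ZArith Lra Lia Psatz Classical.
From Coquelicot Require Import Coquelicot.
Open Scope C_scope.

Definition cis (t : R) : C := (cos t, sin t).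

Definition inv_golden : R := (sqrt 5 - 1) / 2.

Lemma Cmult_cis s t : cis s * cis t = cis (s + t).
Proof.
  unfold cis, Cmult; simpl. rewrite cos_plus, sin_plus. f_equal; ring.
Qed.

Lemma Cpow_cis t n : cis t ^ n = cis (INR n * t).
Proof.
  induction n as [|n IH].
  - unfold cis; simpl. rewrite Rmult_0_l, cos_0, sin_0. reflexivity.
  - rewrite Cpow_S, IH, Cmult_cis, S_INR. f_equal; ring.
Qed.

Lemma Cmod_cis t : Cmod (cis t) = 1%R.
Proof.
  unfold Cmod, cis; cbn [fst snd].
  pose proof (sin2_cos2 t) as H. unfold Rsqr in H.
  replace (cos t ^ 2 + sin t ^ 2)%R with 1%R by nra. apply sqrt_1.
Qed.

Lemma Cconj_root_of_unity (w : C) (n : nat) :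
  Cmod w = 1%R -> w ^ S n = 1 -> Cconj w = w ^ n.
Proof.
  intros Hmod Hpow.
  assert (Hw : w * Cconj w = 1).
  { rewrite <- Cmod2_conj, Hmod, pow1. reflexivity. }
  transitivity (Cconj w * w ^ S n); [rewrite Hpow; ring|].
  rewrite Cpow_S. transitivity ((w * Cconj w) * w ^ n); [ring|].
  rewrite Hw. ring.
Qed.

Lemma cyclotomic5 (w : C) : w ^ 5 = 1 -> w <> 1 -> w ^ 4 = - (1 + w + w ^ 2 + w ^ 3).
Proof.
  intros H5 H1.
  assert (Hd : w - 1 <> 0) by (apply Cminus_eq_contra; exact H1).
  transitivity (w ^ 4 - (w ^ 5 - 1) / (w - 1)); [rewrite H5; field; exact Hd|].
  field. exact Hd.
Qed.

Lemma zeta5_cis : zeta5 = cis (2 * PI / 5).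
Proof. reflexivity. Qed.

Lemma Cmod_zeta5 : Cmod zeta5 = 1%R.
Proof. rewrite zeta5_cis. apply Cmod_cis. Qed.

Lemma zeta5_pow5 : zeta5 ^ 5 = 1.
Proof.
  rewrite zeta5_cis, Cpow_cis.
  replace (INR 5 * (2 * PI / 5))%R with (2 * PI)%R by (simpl; field).
  unfold cis. rewrite cos_2PI, sin_2PI. reflexivity.
Qed.

Lemma zeta5_neq_1 : zeta5 <> 1.
Proof.
  intro E. apply (f_equal snd) in E. simpl in E.
  assert (0 < sin (2 * PI / 5))%R by (apply sin_gt_0; pose proof PI_RGT_0; lra).
  lra.
Qed.

Lemma zeta5_pow4 : zeta5 ^ 4 = - (1 + zeta5 + zeta5 ^ 2 + zeta5 ^ 3).
Proof. exact (cyclotomic5 _ zeta5_pow5 zeta5_neq_1). Qed.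

Lemma Cconj_zeta5 : Cconj zeta5 = zeta5 ^ 4.
Proof. exact (Cconj_root_of_unity _ 4 Cmod_zeta5 zeta5_pow5). Qed.

Lemma inv_golden_pos : (0 < inv_golden)%R.
Proof.
  unfold inv_golden. assert (1 < sqrt 5)%R by (rewrite <- sqrt_1; apply sqrt_lt_1; lra).
  lra.
Qed.

Lemma inv_golden_eq : (inv_golden ^ 2 + inv_golden - 1 = 0)%R.
Proof.
  unfold inv_golden. pose proof (sqrt_sqrt 5) as H. nra.
Qed.

Lemma inv_golden_unique (r : R) : (0 < r)%R -> (r ^ 2 + r - 1 = 0)%R -> r = inv_golden.
Proof.
  intros Hr Hq. pose proof inv_golden_pos. pose proof inv_golden_eq.
  assert (Hf : ((r - inv_golden) * (r + inv_golden + 1) = 0)%R) by nra.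
  apply Rmult_integral in Hf. lra.
Qed.

Lemma zeta5_add_pow4 : zeta5 + zeta5 ^ 4 = RtoC inv_golden.
Proof.
  set (r := (2 * cos (2 * PI / 5))%R).
  assert (Hr : zeta5 + zeta5 ^ 4 = RtoC r).
  { rewrite <- Cconj_zeta5. unfold zeta5, Cconj, Cplus, RtoC, r; cbn. f_equal; ring. }
  rewrite Hr. f_equal. apply inv_golden_unique.
  - assert (0 < cos (2 * PI / 5))%R by (apply cos_gt_0; pose proof PI_RGT_0; lra).
    unfold r. lra.
  - apply RtoC_inj. rewrite RtoC_minus, RtoC_plus, RtoC_pow, <- Hr. ring [zeta5_pow4].
Qed.

Lemma ZtoC_add (m n : Z) : ZtoC (m + n) = ZtoC m + ZtoC n.
Proof. unfold ZtoC. rewrite plus_IZR, RtoC_plus. reflexivity. Qed.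

Lemma ZtoC_sub (m n : Z) : ZtoC (m - n) = ZtoC m - ZtoC n.
Proof. unfold ZtoC. rewrite minus_IZR, RtoC_minus. reflexivity. Qed.

Lemma ZtoC_mul (m n : Z) : ZtoC (m * n) = ZtoC m * ZtoC n.
Proof. unfold ZtoC. rewrite mult_IZR, RtoC_mult. reflexivity. Qed.

Lemma Cconj_ZtoC (n : Z) : Cconj (ZtoC n) = ZtoC n.
Proof. unfold ZtoC, RtoC, Cconj; cbn. f_equal; ring. Qed.

Lemma zcomb_add a0 a1 a2 a3 b0 b1 b2 b3 w :
  zcomb (a0 + b0) (a1 + b1) (a2 + b2) (a3 + b3) w
  = zcomb a0 a1 a2 a3 w + zcomb b0 b1 b2 b3 w.
Proof. unfold zcomb. rewrite !ZtoC_add. ring. Qed.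

Lemma zcomb_sub a0 a1 a2 a3 b0 b1 b2 b3 w :
  zcomb (a0 - b0) (a1 - b1) (a2 - b2) (a3 - b3) w
  = zcomb a0 a1 a2 a3 w - zcomb b0 b1 b2 b3 w.
Proof. unfold zcomb. rewrite !ZtoC_sub. ring. Qed.

Lemma Cconj_zcomb a0 a1 a2 a3 w :
  Cconj (zcomb a0 a1 a2 a3 w) = zcomb a0 a1 a2 a3 (Cconj w).
Proof.
  unfold zcomb. rewrite !Cplus_conj, !Cmult_conj, !Cpow_conj, !Cconj_ZtoC. reflexivity.
Qed.

Definition sqnorm_coef0 (a0 a1 a2 a3 : Z) : Z :=
  a0 * a0 + a1 * a1 + a2 * a2 + a3 * a3 - (a0 * a2 + a1 * a3 + a0 * a3).

Definition sqnorm_coef1 (a0 a1 a2 a3 : Z) : Z :=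
  (a0 * a1 + a1 * a2 + a2 * a3) - (a0 * a2 + a1 * a3 + a0 * a3).

(* The Gram matrix of 1, w, w^2, w^3 has entries w^(i-j), and w^k + w^(-k) equals
   w + w^4 for k = 1 and -1 - (w + w^4) for k = 2, 3. *)
Lemma Cmod_zcomb_root5_sq (w : C) a0 a1 a2 a3 :
  Cmod w = 1%R -> w ^ 5 = 1 -> w <> 1 ->
  RtoC (Cmod (zcomb a0 a1 a2 a3 w) ^ 2)
  = ZtoC (sqnorm_coef0 a0 a1 a2 a3) + ZtoC (sqnorm_coef1 a0 a1 a2 a3) * (w + w ^ 4).
Proof.
  intros Hmod H5 H1.
  rewrite Cmod2_conj, Cconj_zcomb, (Cconj_root_of_unity w 4 Hmod H5).
  unfold sqnorm_coef0, sqnorm_coef1, zcomb.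
  rewrite !ZtoC_sub, !ZtoC_add, !ZtoC_mul.
  pose proof (cyclotomic5 w H5 H1) as H4. ring [H4].
Qed.

Lemma Cmod_zcomb_zeta5_sq a0 a1 a2 a3 :
  (Cmod (zcomb a0 a1 a2 a3 zeta5) ^ 2
   = IZR (sqnorm_coef0 a0 a1 a2 a3) + IZR (sqnorm_coef1 a0 a1 a2 a3) * inv_golden)%R.
Proof.
  apply RtoC_inj.
  rewrite (Cmod_zcomb_root5_sq _ _ _ _ _ Cmod_zeta5 zeta5_pow5 zeta5_neq_1).
  rewrite RtoC_plus, RtoC_mult, <- zeta5_add_pow4. reflexivity.
Qed.

Lemma Cmod_zcomb_zeta5_sq_sigma a0 a1 a2 a3 :
  (Cmod (zcomb a0 a1 a2 a3 (zeta5 ^ 2)) ^ 2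
   = IZR (sqnorm_coef0 a0 a1 a2 a3) - IZR (sqnorm_coef1 a0 a1 a2 a3) * (1 + inv_golden))%R.
Proof.
  assert (Hmod : Cmod (zeta5 ^ 2) = 1%R) by (rewrite Cmod_pow, Cmod_zeta5; ring).
  assert (H5 : (zeta5 ^ 2) ^ 5 = 1).
  { rewrite <- Cpow_mult_r, (Cpow_mult_r _ 5 2), zeta5_pow5. ring. }
  assert (H1 : zeta5 ^ 2 <> 1).
  { intro E. apply zeta5_neq_1. rewrite <- zeta5_pow5. ring [E]. }
  apply RtoC_inj.
  rewrite (Cmod_zcomb_root5_sq _ _ _ _ _ Hmod H5 H1).
  rewrite RtoC_minus, RtoC_mult, RtoC_plus, <- zeta5_add_pow4.
  fold (ZtoC (sqnorm_coef0 a0 a1 a2 a3)) (ZtoC (sqnorm_coef1 a0 a1 a2 a3)).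
  ring [zeta5_pow4].
Qed.

Lemma inv_golden_bounds : (0.618 < inv_golden < 0.6181)%R.
Proof. pose proof inv_golden_pos. pose proof inv_golden_eq. split; nra. Qed.

Lemma golden_norm_gap (p q : Z) :
  (0 < IZR p + IZR q * inv_golden < 1)%R ->
  (0 <= IZR p - IZR q * (1 + inv_golden) <= 4)%R ->
  p = 1%Z /\ q = (-1)%Z.
Proof.
  intros Hx Hy. pose proof inv_golden_bounds.
  assert (Hq : (-2 < q < 1)%Z) by (split; apply lt_IZR; simpl; nra).
  assert (Hq' : q = 0%Z \/ q = (-1)%Z) by lia.
  destruct Hq' as [-> | ->]; simpl IZR in *.
  - assert (Hp : (0 < p < 1)%Z) by (split; apply lt_IZR; simpl; lra). lia.
  - assert (Hp : (0 < p < 2)%Z) by (split; apply lt_IZR; simpl; lra). lia.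
Qed.

Lemma Cmod_sub_le (u v : C) : (Cmod (u - v) <= Cmod u + Cmod v)%R.
Proof. unfold Cminus. rewrite <- (Cmod_opp v). apply Cmod_triangle. Qed.

Lemma S_dist_dichotomy (z z' : C) :
  in_S z -> in_S z' -> z' <> z -> Cmod (z' - z) = inv_golden \/ (1 <= Cmod (z' - z))%R.
Proof.
  intros [a0 [a1 [a2 [a3 [-> Ha]]]]] [b0 [b1 [b2 [b3 [-> Hb]]]]] Hne.
  destruct (Rlt_or_le (Cmod (zcomb b0 b1 b2 b3 zeta5 - zcomb a0 a1 a2 a3 zeta5)) 1)
    as [Hlt | Hge]; [left | right; exact Hge].
  rewrite <- zcomb_sub in Hlt |- *.
  set (c0 := (b0 - a0)%Z) in *; set (c1 := (b1 - a1)%Z) in *;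
  set (c2 := (b2 - a2)%Z) in *; set (c3 := (b3 - a3)%Z) in *.
  assert (Hpos : (0 < Cmod (zcomb c0 c1 c2 c3 zeta5))%R).
  { destruct (Cmod_ge_0 (zcomb c0 c1 c2 c3 zeta5)) as [h | h]; [exact h |].
    exfalso. apply Hne. symmetry in h. apply Cmod_eq_0 in h.
    unfold c0, c1, c2, c3 in h. rewrite zcomb_sub in h.
    rewrite <- (Cplus_0_l (zcomb a0 a1 a2 a3 zeta5)), <- h. ring. }
  assert (Hsigma : (Cmod (zcomb c0 c1 c2 c3 (zeta5 ^ 2)) <= 2)%R).
  { unfold c0, c1, c2, c3. rewrite zcomb_sub.
    pose proof (Cmod_sub_le (zcomb b0 b1 b2 b3 (zeta5 ^ 2)) (zcomb a0 a1 a2 a3 (zeta5 ^ 2))).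
    lra. }
  pose proof (Cmod_ge_0 (zcomb c0 c1 c2 c3 (zeta5 ^ 2))).
  destruct (golden_norm_gap (sqnorm_coef0 c0 c1 c2 c3) (sqnorm_coef1 c0 c1 c2 c3)) as [Hp Hq].
  - rewrite <- Cmod_zcomb_zeta5_sq. split; nra.
  - rewrite <- Cmod_zcomb_zeta5_sq_sigma. split; nra.
  - pose proof (Cmod_zcomb_zeta5_sq c0 c1 c2 c3) as Hsq.
    rewrite Hp, Hq in Hsq. simpl IZR in Hsq.
    pose proof inv_golden_pos. pose proof inv_golden_eq.
    nra.
Qed.

Lemma cos_2PI_5 : cos (2 * PI / 5) = (inv_golden / 2)%R.
Proof.
  pose proof (f_equal fst zeta5_add_pow4) as H.
  rewrite <- Cconj_zeta5 in H. unfold zeta5, Cconj, Cplus in H; cbn in H. lra.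
Qed.

Lemma zeta5_sq_coords :
  zeta5 ^ 2 = (- (1 + inv_golden) / 2, inv_golden * sin (2 * PI / 5))%R.
Proof.
  pose proof (sin2_cos2 (2 * PI / 5)) as H. unfold Rsqr in H.
  rewrite cos_2PI_5 in H. pose proof inv_golden_eq.
  replace (zeta5 ^ 2) with (zeta5 * zeta5) by ring.
  unfold zeta5, Cmult; cbn. rewrite cos_2PI_5. f_equal; nra.
Qed.

Lemma Cmod_le_1 (p : C) : (Cmod p <= 1)%R <-> (fst p ^ 2 + snd p ^ 2 <= 1)%R.
Proof.
  unfold Cmod. assert (H0 : (0 <= fst p ^ 2 + snd p ^ 2)%R) by nra. split; intro H.
  - pose proof (sqrt_pos (fst p ^ 2 + snd p ^ 2)). rewrite <- (sqrt_sqrt _ H0). nra.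
  - apply Rle_trans with (sqrt 1); [apply sqrt_le_1_alt; exact H | rewrite sqrt_1; lra].
Qed.

(* |x + v|^2 = |x|^2 + 2 <x, v> + 1, and |x|^2 <= |x| <= -2 <x, v>. *)
Lemma add_unit_in_disk (x1 x2 v1 v2 : R) :
  (v1 ^ 2 + v2 ^ 2 = 1)%R -> (x1 ^ 2 + x2 ^ 2 <= 1)%R ->
  (x1 * v1 + x2 * v2 <= 0)%R -> (x1 ^ 2 + x2 ^ 2 <= 4 * (x1 * v1 + x2 * v2) ^ 2)%R ->
  ((x1 + v1) ^ 2 + (x2 + v2) ^ 2 <= 1)%R.
Proof. intros. nra. Qed.

Lemma disk_cover_upper (x : C) : (0 <= snd x)%R -> (Cmod x <= 1)%R ->
  (Cmod (x + 1) <= 1 \/ Cmod (x + Cconj zeta5) <= 1 \/ Cmod (x + Cconj (zeta5 ^ 2)) <= 1)%R.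
Proof.
  destruct x as [x1 x2]. rewrite !Cmod_le_1, zeta5_sq_coords. unfold zeta5, Cconj, Cplus.
  cbn. rewrite cos_2PI_5. intros Hx2 Hx.
  set (s := sin (2 * PI / 5)).
  assert (Hs : (0 < s)%R) by (apply sin_gt_0; pose proof PI_RGT_0; lra).
  assert (Hs2 : (s ^ 2 = 1 - (inv_golden / 2) ^ 2)%R).
  { pose proof (sin2_cos2 (2 * PI / 5)) as H. unfold Rsqr in H. rewrite cos_2PI_5 in H.
    fold s in H. nra. }
  pose proof inv_golden_bounds. pose proof inv_golden_eq.
  assert (Hgs : (1 / 2 <= inv_golden * s)%R).
  { assert (1 / 4 <= (inv_golden * s) ^ 2)%R by nra. nra. }
  destruct (Rle_or_lt 0 x1) as [Hx1 | Hx1].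
  - right; right. apply add_unit_in_disk; [nra | exact Hx | nra |].
    assert ((x1 + x2) / 2 <= (1 + inv_golden) / 2 * x1 + inv_golden * s * x2)%R by nra.
    nra.
  - destruct (Rle_or_lt 0 (x1 + x2)) as [Hd | Hd].
    + right; left. apply add_unit_in_disk; [nra | exact Hx | nra |].
      assert (Hsx : (0 <= s * x2 <= - (x1 * (inv_golden / 2) + x2 * - s))%R) by nra.
      assert ((s * x2) ^ 2 <= (- (x1 * (inv_golden / 2) + x2 * - s)) ^ 2)%R
        by (apply pow_incr; exact Hsx).
      nra.
    + left. apply add_unit_in_disk; nra.
Qed.

(* The five fifth roots of unity are 72 degrees apart, so one lies within 36 degrees of -x. *)
Lemma disk_cover (x : C) : (Cmod x <= 1)%R ->
  (Cmod (x + 1) <= 1 \/ Cmod (x + zeta5) <= 1 \/ Cmod (x + Cconj zeta5) <= 1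
   \/ Cmod (x + zeta5 ^ 2) <= 1 \/ Cmod (x + Cconj (zeta5 ^ 2)) <= 1)%R.
Proof.
  intros Hx. destruct (Rle_or_lt 0 (snd x)) as [Hup | Hlow].
  - destruct (disk_cover_upper x Hup Hx) as [H | [H | H]]; tauto.
  - assert (Hc : forall v, Cmod (Cconj x + Cconj v) = Cmod (x + v)).
    { intro v. rewrite <- Cplus_conj. apply Cmod_conj. }
    destruct (disk_cover_upper (Cconj x)) as [H | [H | H]].
    + cbn. lra.
    + rewrite Cmod_conj. exact Hx.
    + left. rewrite <- Hc.
      replace (Cconj 1) with (RtoC 1) by (unfold Cconj, RtoC; cbn; f_equal; ring).
      exact H.
    + right; left. rewrite <- Hc. exact H.
    + do 3 right; left. rewrite <- Hc. exact H.
Qed.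

Lemma in_S_shift a0 a1 a2 a3 e0 e1 e2 e3 :
  Cmod (zcomb e0 e1 e2 e3 zeta5) = 1%R ->
  (Cmod (zcomb a0 a1 a2 a3 (zeta5 ^ 2) + zcomb e0 e1 e2 e3 (zeta5 ^ 2)) <= 1)%R ->
  exists z', in_S z' /\ z' <> zcomb a0 a1 a2 a3 zeta5
             /\ Cmod (z' - zcomb a0 a1 a2 a3 zeta5) = 1%R.
Proof.
  intros He Hs.
  set (z := zcomb a0 a1 a2 a3 zeta5).
  exists (zcomb (a0 + e0) (a1 + e1) (a2 + e2) (a3 + e3) zeta5).
  assert (Hd : zcomb (a0 + e0) (a1 + e1) (a2 + e2) (a3 + e3) zeta5 - z
               = zcomb e0 e1 e2 e3 zeta5) by (unfold z; rewrite zcomb_add; ring).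
  split; [| split].
  - exists (a0 + e0)%Z, (a1 + e1)%Z, (a2 + e2)%Z, (a3 + e3)%Z.
    split; [reflexivity |]. rewrite zcomb_add. exact Hs.
  - intro E. rewrite E in Hd. unfold Cminus in Hd. rewrite Cplus_opp_r in Hd.
    rewrite <- Hd, Cmod_0 in He. lra.
  - rewrite Hd. exact He.
Qed.

Lemma S_unit_neighbour (z : C) :
  in_S z -> exists z', in_S z' /\ z' <> z /\ Cmod (z' - z) = 1%R.
Proof.
  intros [a0 [a1 [a2 [a3 [-> Ha]]]]].
  assert (Hpow : forall k, Cmod (zeta5 ^ k) = 1%R).
  { intro k. rewrite Cmod_pow, Cmod_zeta5. apply pow1. }
  (* The shifts are 1, zeta5^3, zeta5^2, zeta5, zeta5^4, with sigma-images
     1, zeta5, conj zeta5, zeta5^2, conj (zeta5^2). *)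
  destruct (disk_cover _ Ha) as [H | [H | [H | [H | H]]]].
  - apply (in_S_shift _ _ _ _ 1 0 0 0).
    + replace (zcomb 1 0 0 0 zeta5) with (zeta5 ^ 0) by (unfold zcomb, ZtoC; ring). apply Hpow.
    + replace (zcomb 1 0 0 0 (zeta5 ^ 2)) with (RtoC 1) by (unfold zcomb, ZtoC; ring). exact H.
  - apply (in_S_shift _ _ _ _ 0 0 0 1).
    + replace (zcomb 0 0 0 1 zeta5) with (zeta5 ^ 3) by (unfold zcomb, ZtoC; ring). apply Hpow.
    + replace (zcomb 0 0 0 1 (zeta5 ^ 2)) with zeta5
        by (unfold zcomb, ZtoC; ring [zeta5_pow4]).
      exact H.
  - apply (in_S_shift _ _ _ _ 0 0 1 0).
    + replace (zcomb 0 0 1 0 zeta5) with (zeta5 ^ 2) by (unfold zcomb, ZtoC; ring). apply Hpow.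
    + replace (zcomb 0 0 1 0 (zeta5 ^ 2)) with (Cconj zeta5)
        by (rewrite Cconj_zeta5; unfold zcomb, ZtoC; ring).
      exact H.
  - apply (in_S_shift _ _ _ _ 0 1 0 0).
    + replace (zcomb 0 1 0 0 zeta5) with (zeta5 ^ 1) by (unfold zcomb, ZtoC; ring). apply Hpow.
    + replace (zcomb 0 1 0 0 (zeta5 ^ 2)) with (zeta5 ^ 2) by (unfold zcomb, ZtoC; ring).
      exact H.
  - apply (in_S_shift _ _ _ _ (-1) (-1) (-1) (-1)).
    + replace (zcomb (-1) (-1) (-1) (-1) zeta5) with (zeta5 ^ 4)
        by (unfold zcomb, ZtoC; ring [zeta5_pow4]).
      apply Hpow.
    + replace (zcomb (-1) (-1) (-1) (-1) (zeta5 ^ 2)) with (Cconj (zeta5 ^ 2))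
        by (rewrite Cpow_conj, Cconj_zeta5; unfold zcomb, ZtoC; ring [zeta5_pow4]).
      exact H.
Qed.

Theorem mainTheorem1 :
  forall z : C, in_S z ->
    exists d : R,
      (d = (sqrt 5 - 1) / 2 \/ d = 1)%R /\
      (exists z' : C, in_S z' /\ z' <> z /\ Cmod (z' - z) = d) /\
      (forall z' : C, in_S z' -> z' <> z -> (d <= Cmod (z' - z))%R).
Proof.
  intros z Hz.
  assert (Hlt : (inv_golden < 1)%R) by (pose proof inv_golden_bounds; lra).
  destruct (classic (exists z', in_S z' /\ z' <> z /\ Cmod (z' - z) = inv_golden))
    as [Hnear | Hfar].
  - exists inv_golden. split; [left; reflexivity | split; [exact Hnear |]].
    intros z' Hz' Hne. destruct (S_dist_dichotomy z z' Hz Hz' Hne); lra.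
  - exists 1%R. split; [right; reflexivity | split; [exact (S_unit_neighbour z Hz) |]].
    intros z' Hz' Hne. destruct (S_dist_dichotomy z z' Hz Hz' Hne) as [E | E]; [| exact E].
    exfalso. apply Hfar. exists z'. auto.
Qed.
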